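(* Let $\nu\in\mathcal{P}(\Omega)$ and let $(\mathcal{A},X)$ be a tagged partition of $\Omega$ associated with $\nu$, $\mathcal{A}=(\Omega_1,\dots,\Omega_N)$, $X=(x_1,\dots,x_N)$. (i) Let $y\in\mathscr{C}^{0,1}(\Omega,\mathbb{R}^d)$ and $\Xi=(y(x_1),\dots,y(x_N))$. Then for every $f\in\mathscr{C}^\infty_c(\Omega\times\mathbb{R}^d)$, $$\big|\langle\mu^\nu_y-\mu^E_{(X,\Xi)},f\rangle\big|\le\frac{C_\Omega}N\operatorname{Lip}\big(x\mapsto f(x,y(x))\big).$$ (ii) Let $\Xi=(\xi_1,\dots,\xi_N)\in\mathbb{R}^{dN}$ and $y_\Xi(x)=\sum_{i=1}^N\xi_i\mathds{1}_{\Omega_i}(x)$. Then for every $f\in\mathscr{C}^\infty_c(\Omega\times\mathbb{R}^d)$, $$\big|\langle\mu^\nu_{y_\Xi}-\mu^E_{(X,\Xi)},f\rangle\big|\le\frac{C_\Omega}N\max_{1\le i\le N}\operatorname{Lip}\big(x\mapsto f(x,\xi_i)\big).$$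
   Context: $(\Omega,d_\Omega)$ is a complete metric space. A tagged partition of $\Omega$ associated with $\nu$: disjoint subsets $\Omega_1,\dots,\Omega_N$ with union $\Omega$, $\nu(\Omega_i)=1/N$, $\mathrm{diam}(\Omega_i)\le C_\Omega/N$, and points $x_i\in\Omega_i$. Empirical measure: $\mu^E_{(X,\Xi)}=\frac1N\sum_{i=1}^N\delta_{x_i}\otimes\delta_{\xi_i}$. $\nu$-monokinetic measure: for measurable $y:\Omega\to\mathbb{R}^d$, $\mu^\nu_y=\nu\otimes\delta_{y(\cdot)}$, i.e. $\langle\mu^\nu_y,f\rangle=\int_\Omega f(x,y(x))\,d\nu(x)$. $\mathds{1}_{\Omega_i}$ is the indicator function; $\operatorname{Lip}$ the Lipschitz constant; $\mathscr{C}^{0,1}$ Lipschitz maps. *)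

From HB Require Import structures.
From mathcomp Require Import all_boot all_order all_algebra.
From mathcomp Require Import all_classical all_reals all_analysis.
Set Implicit Arguments. Unset Strict Implicit. Unset Printing Implicit Defensive.
Import Order.TTheory GRing.Theory Num.Theory.
Import numFieldNormedType.Exports.
Local Open Scope classical_set_scope.
Local Open Scope ring_scope.

Section Defs.
Variables (R : realType) (T : Type) (dist : T -> T -> R).

Definition is_metric : Prop :=
  [/\ forall x y, 0 <= dist x y,
      forall x y, dist x y = 0 <-> x = y,
      forall x y, dist x y = dist y x &
      forall x y z, dist x z <= dist x y + dist y z].

Definition metric_complete : Prop :=
  forall u : nat -> T,
    (forall e : R, 0 < e -> exists M : nat, forall m n : nat,
        (M <= m)%N -> (M <= n)%N -> dist (u m) (u n) < e) ->
    exists l : T, (fun n => dist (u n) l) @ \oo --> (0 : R).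

Definition metric_open (A : set T) : Prop :=
  forall x, A x -> exists2 r : R, 0 < r & forall y, dist x y < r -> A y.

Definition Lip (g : T -> R) : \bar R :=
  ereal_sup ([set 0%E] `|`
    [set r | exists x y, x <> y /\ r = (`|g x - g y| / dist x y)%:E]).

Definition lipschitz_map (n : nat) (y : T -> 'rV[R]_n) : Prop :=
  exists L : R, forall x x', `|y x - y x'| <= L * dist x x'.

Definition pdist (n : nat) (p q : T * 'rV[R]_n) : R :=
  Num.max (dist p.1 q.1) `|p.2 - q.2|.

Definition seq_compact (n : nat) (K : set (T * 'rV[R]_n)) : Prop :=
  forall u : nat -> T * 'rV[R]_n, (forall k, K (u k)) ->
    exists phi : nat -> nat, (forall k, (phi k < phi k.+1)%N) /\
      exists2 l, K l & (fun k => pdist (u (phi k)) l) @ \oo --> (0 : R).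

Definition test_function (n : nat) (f : T -> 'rV[R]_n -> R) : Prop :=
  (forall p : T * 'rV[R]_n, forall e : R, 0 < e -> exists2 del : R, 0 < del &
     forall q, pdist p q < del -> `|f p.1 p.2 - f q.1 q.2| < e) /\
  exists2 K : set (T * 'rV[R]_n), seq_compact K &
     forall p, ~ K p -> f p.1 p.2 = 0.

Definition tagged_partition {d} (T' : measurableType d) (dist' : T' -> T' -> R)
  (nu : probability T' R) (C : R) (N : nat)
  (A : 'I_N -> set T') (X : 'I_N -> T') : Prop :=
  [/\ (forall i, measurable (A i)) /\
        (forall i j, i != j -> A i `&` A j = set0),
      \bigcup_(i in [set: 'I_N]) A i = [set: T'],
      forall i, nu (A i) = (N%:R^-1)%:E,
      forall i x y, A i x -> A i y -> dist' x y <= C / N%:R &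
      forall i, A i (X i)].
End Defs.

(* <mu^nu_y, f> = \int f(x, y(x)) dnu(x) *)
Definition monokinetic_pair {R : realType} {d} {T : measurableType d} {n : nat}
  (nu : probability T R) (y : T -> 'rV[R]_n) (f : T -> 'rV[R]_n -> R) : \bar R :=
  (\int[nu]_x (f x (y x))%:E)%E.

(* <mu^E_(X,Xi), f> = 1/N sum_i f(x_i, xi_i) *)
Definition empirical_pair {R : realType} {T : Type} {n N : nat}
  (X : 'I_N -> T) (Xi : 'I_N -> 'rV[R]_n) (f : T -> 'rV[R]_n -> R) : R :=
  N%:R^-1 * \sum_(i < N) f (X i) (Xi i).

Definition piecewise_const {R : realType} {T : Type} {n N : nat}
  (A : 'I_N -> set T) (Xi : 'I_N -> 'rV[R]_n) (x : T) : 'rV[R]_n :=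
  \sum_(i < N) (\1_(A i) x) *: Xi i.

From HB Require Import structures.
From mathcomp Require Import all_boot all_order all_algebra.
From mathcomp Require Import all_classical all_reals all_analysis.
From mathcomp Require Import measurable_realfun lra.
Import Order.TTheory GRing.Theory Num.Theory.
Local Open Scope classical_set_scope.
Local Open Scope ring_scope.

(* Both estimates come from one quadrature bound. If g agrees on each cell
   Omega_i with a function g_i whose Lipschitz constant is at most L, then on
   Omega_i we have |g x - g_i(x_i)| <= L C/N, because diam Omega_i <= C/N.
   Since every cell has mass 1/N, the empirical mean (1/N) sum_i g_i(x_i) is
   the integral of the step function equal to g_i(x_i) on Omega_i, so the
   difference of the two pairings is the integral of a function bounded by
   L C/N against a probability measure. For (i) take g_i := x |-> f(x, y(x))
   for all i, for (ii) take g_i := x |-> f(x, xi_i). *)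

Section CellwiseSum.
Context {T : Type} {N : nat} {A : 'I_N -> set T}.
Hypothesis A_disj : forall i j, i != j -> A i `&` A j = set0.

Lemma cell_unique {i j x} : A i x -> A j x -> i = j.
Proof.
move=> Aix Ajx; apply/eqP; apply: contraT => /A_disj ij.
by have : (A i `&` A j) x by []; rewrite ij.
Qed.

Lemma sum_indic_cell {R : ringType} {V : lmodType R} (a : 'I_N -> V) {i x} :
  A i x -> \sum_(j < N) (\1_(A j) x : R) *: a j = a i.
Proof.
move=> Aix; rewrite (bigD1 i) //= indicE mem_set // scale1r big1 ?addr0 //.
move=> j ji; rewrite indicE memNset ?scale0r // => Ajx.
by move/eqP: ji; rewrite (cell_unique Ajx Aix).
Qed.

End CellwiseSum.

Lemma probability_setT_neq0 {R : realType} {dT : measure_display}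
  {T : measurableType dT} (nu : probability T R) : [set: T] !=set0.
Proof.
apply/set0P/eqP => T0.
by have := probability_setT nu; rewrite T0 measure0 => /eqP; rewrite eq_sym onee_eq0.
Qed.

Section Quantization.
Context {R : realType} {dT : measure_display} {T : measurableType dT}.
Context (nu : probability T R) {N : nat} {A : 'I_N -> set T}.
Hypotheses (A_meas : forall i, measurable (A i))
  (A_disj : forall i j, i != j -> A i `&` A j = set0)
  (A_cover : forall x, exists i, A i x)
  (A_mass : forall i, nu (A i) = (N%:R^-1)%:E).

Definition step_fun (a : 'I_N -> R) (x : T) : R := \sum_(i < N) \1_(A i) x * a i.

Lemma measurable_fun_cellwise {g : T -> R} {gi : 'I_N -> T -> R} :
  (forall i x, A i x -> g x = gi i x) -> (forall i, measurable_fun setT (gi i)) ->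
  measurable_fun setT g.
Proof.
move=> gE mgi.
have -> : g = fun x => \sum_(i < N) \1_(A i) x * gi i x.
  apply/funext => x; have [i Aix] := A_cover x.
  by rewrite (gE _ _ Aix) (sum_indic_cell A_disj (gi^~ x) Aix).
by apply: measurable_sum => i; apply: measurable_funM => //; apply: measurable_indic.
Qed.

Lemma step_fun_cell a {i x} : A i x -> step_fun a x = a i.
Proof. exact: sum_indic_cell. Qed.

Lemma measurable_step_fun a : measurable_fun setT (step_fun a).
Proof.
apply: (measurable_fun_cellwise (gi := fun i _ => a i)) => [i x Aix|i].
  exact: step_fun_cell.
exact: measurable_cst.
Qed.

Lemma bounded_cellwise (g : T -> R) (a : 'I_N -> R) (c : R) :
  (forall i x, A i x -> `|g x - a i| <= c) -> [bounded g x | x in setT].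
Proof.
move=> ga; exists (c + \sum_(i < N) `|a i|); split; first exact: num_real.
move=> M cM x _ /=; have [i Aix] := A_cover x; apply/ltW/(le_lt_trans _ cM).
rewrite -[g x](subrK (a i)) (le_trans (ler_normD _ _)) // lerD ?ga //.
by rewrite (bigD1 i) //= lerDl sumr_ge0.
Qed.

Lemma integrable_cellwise (g : T -> R) (a : 'I_N -> R) (c : R) :
  measurable_fun setT g -> (forall i x, A i x -> `|g x - a i| <= c) ->
  nu.-integrable setT (EFin \o g).
Proof.
move=> mg ga; apply: measurable_bounded_integrable => //.
  by rewrite ltey_eq fin_num_measure.
exact: bounded_cellwise _ _ _ ga.
Qed.

Lemma integral_step_fun a :
  (\int[nu]_x (step_fun a x)%:E = (N%:R^-1 * \sum_(i < N) a i)%:E)%E.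
Proof.
have indic_int i : nu.-integrable setT (fun x => (\1_(A i) x)%:E).
  exact: integrable_indic.
under eq_integral do rewrite /step_fun -sumEFin (eq_bigr _ (fun i _ => EFinM _ _)).
rewrite integral_sum //; last by move=> i; apply: integrableZr.
rewrite mulr_sumr -sumEFin; apply: eq_bigr => i _.
rewrite integralZr // integral_indic // setIT EFinM; congr (_ * _)%E.
exact: A_mass.
Qed.

Lemma integral_cellwise_approx (g : T -> R) (a : 'I_N -> R) (c : R) :
  measurable_fun setT g -> (forall i x, A i x -> `|g x - a i| <= c) ->
  (`| \int[nu]_x (g x)%:E - (N%:R^-1 * \sum_(i < N) a i)%:E | <= c%:E)%E.
Proof.
move=> mg ga.
have step_exact i x : A i x -> `|step_fun a x - a i| <= 0.
  by move=> Aix; rewrite (step_fun_cell a Aix) subrr normr0.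
have g_step x : `|g x - step_fun a x| <= c.
  by have [i Aix] := A_cover x; rewrite (step_fun_cell a Aix) ga.
have c_ge0 : 0 <= c.
  have [x _] := probability_setT_neq0 nu; exact: le_trans (g_step x).
rewrite -integral_step_fun -integralB_EFin //; last 2 first.
- exact: integrable_cellwise mg ga.
- exact: integrable_cellwise (measurable_step_fun a) step_exact.
apply: le_trans (le_abse_integral _ _ _) _ => //.
  by apply/measurable_EFinP/measurable_funB => //; apply: measurable_step_fun.
apply: le_trans (integral_le_bound c%:E _ _ _ _) _ => //.
- by apply/measurable_EFinP/measurable_funB => //; apply: measurable_step_fun.
- by apply: aeW => x _; rewrite -EFinB abse_EFin lee_fin.
by rewrite [X in (_ * X)%E](_ : _ = 1%E) ?mule1 //; exact: probability_setT.
Qed.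

End Quantization.

Section Lipschitz.
Context {R : realType} {T : Type} {dist : T -> T -> R}.

Lemma Lip_ge0 (g : T -> R) : (0 <= Lip dist g)%E.
Proof. by apply: ereal_sup_ubound; left. Qed.

Lemma lipschitz_of_Lip_le {g : T -> R} {l : R} :
  is_metric dist -> (Lip dist g <= l%:E)%E ->
  forall x y, `|g x - g y| <= l * dist x y.
Proof.
case=> dist_ge0 dist_eq0 _ _ Lg x y; have [<-|xy] := pselect (x = y).
  by rewrite subrr normr0 (proj2 (dist_eq0 x x)) // mulr0.
have dxy_gt0 : 0 < dist x y by rewrite lt_def dist_ge0 andbT; apply/eqP => /dist_eq0.
rewrite -ler_pdivrMr // -lee_fin (le_trans _ Lg) //.
by apply: ereal_sup_ubound; right; exists x, y.
Qed.

End Lipschitz.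

Lemma measurable_fun_lipschitz {R : realType} {dT : measure_display}
    {T : measurableType dT} (dist : T -> T -> R) (g : T -> R) (l : R) :
  @measurable _ T = <<s metric_open dist>> -> (forall x y, 0 <= dist x y) ->
  (forall x y, `|g x - g y| <= l * dist x y) -> measurable_fun setT g.
Proof.
move=> measurableE dist_ge0 gl.
apply: (measurability _ (RGenOInfty.measurableE R)).
move=> _ [_ [b ->] <-]; rewrite measurableE; apply: sub_gen_smallest.
move=> t [_ /=]; rewrite in_itv /= andbT => bt.
have l1_gt0 : 0 < `|l| + 1 by rewrite ltr_wpDl.
exists ((g t - b) / (`|l| + 1)); first by rewrite divr_gt0 // subr_gt0.
move=> s; rewrite ltr_pdivlMr // => dts; split => //=; rewrite in_itv /= andbT.
have gts : g t - g s <= `|l| * dist t s.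
  by rewrite (le_trans (ler_norm _)) // (le_trans (gl _ _)) // ler_wpM2r ?ler_norm.
have := dist_ge0 t s; nra.
Qed.

Section TaggedPartition.
Context {R : realType} {dT : measure_display} {T : measurableType dT}.
Context {dist : T -> T -> R} {nu : probability T R} {C : R} {N : nat}
  {A : 'I_N -> set T} {X : 'I_N -> T}.
Hypotheses (dist_metric : is_metric dist)
  (measurableE : @measurable _ T = <<s metric_open dist>>)
  (tagged : tagged_partition dist nu C A X).

Let A_meas : forall i, measurable (A i). Proof. by case: tagged => -[]. Qed.
Let A_disj : forall i j, i != j -> A i `&` A j = set0. Proof. by case: tagged => -[]. Qed.
Let A_mass : forall i, nu (A i) = (N%:R^-1)%:E. Proof. by case: tagged. Qed.
Let A_diam : forall i x y, A i x -> A i y -> dist x y <= C / N%:R.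
Proof. by case: tagged. Qed.
Let X_in : forall i, A i (X i). Proof. by case: tagged. Qed.

Let A_cover x : exists i, A i x.
Proof.
case: tagged => _ cover _ _ _.
by have : [set: T] x by []; rewrite -cover => -[i _ Aix]; exists i.
Qed.

Let dist_ge0 x y : 0 <= dist x y. Proof. by case: dist_metric. Qed.
Let dist_eq0 x y : dist x y = 0 -> x = y. Proof. by case: dist_metric => _ /(_ x y) []. Qed.

Lemma mesh_ge0 : 0 <= C / N%:R.
Proof.
have [x _] := probability_setT_neq0 nu; have [i Aix] := A_cover x.
exact: le_trans (dist_ge0 x x) (A_diam _ _ _ Aix Aix).
Qed.

Lemma tagged_quadrature_error {g : T -> R} (gi : 'I_N -> T -> R) {L : \bar R} :
  (forall i x, A i x -> g x = gi i x) -> (forall i, (Lip dist (gi i) <= L)%E) ->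
  (`| \int[nu]_x (g x)%:E - (N%:R^-1 * \sum_(i < N) gi i (X i))%:E |
     <= (C / N%:R)%:E * L)%E.
Proof.
move=> gE Lgi.
have [x0 _] := probability_setT_neq0 nu; have [i0 _] := A_cover x0.
have L_ge0 := le_trans (Lip_ge0 (dist:=dist) (gi i0)) (Lgi i0).
have cellwise := integral_cellwise_approx nu A_meas A_disj A_cover A_mass.
case: L Lgi L_ge0 => [l | | //] Lgi L_ge0.
- have gi_lip i := lipschitz_of_Lip_le dist_metric (Lgi i).
  have mg : measurable_fun setT g.
    apply: (measurable_fun_cellwise A_meas A_disj A_cover gE) => i.
    exact: measurable_fun_lipschitz measurableE dist_ge0 (gi_lip i).
  rewrite muleC -EFinM; apply: cellwise mg _ => i x Aix.
  rewrite (gE i x Aix) (le_trans (gi_lip _ _ _)) //.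
  by apply: ler_wpM2l; [rewrite -lee_fin | exact: A_diam _ _ _ Aix (X_in i)].
- (* (C/N) * +oo = +oo unless C/N = 0, where every cell is a singleton {X i}. *)
  have [mesh0|mesh_neq0] := eqVneq (C / N%:R) 0; last first.
    by rewrite gt0_muley ?leey // lte_fin lt_def mesh_neq0 mesh_ge0.
  have A_point i x : A i x -> x = X i.
    move=> Aix; apply/dist_eq0/le_anti.
    by rewrite dist_ge0 -mesh0 (A_diam _ _ _ Aix (X_in i)).
  have gE' i x : A i x -> g x = gi i (X i).
    by move=> Aix; rewrite (gE i x Aix) -(A_point i x Aix).
  rewrite mesh0 mul0e; apply: cellwise => [|i x Aix].
    apply: (measurable_fun_cellwise A_meas A_disj A_cover gE') => i.
    exact: measurable_cst.
  by rewrite (gE' i x Aix) subrr normr0.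
Qed.

End TaggedPartition.

Theorem lemma21 (R : realType) (dT : measure_display) (T : measurableType dT)
  (dist : T -> T -> R) (nu : probability T R) (C : R) (n N : nat)
  (A : 'I_N -> set T) (X : 'I_N -> T) :
  is_metric dist -> metric_complete dist ->
  (@measurable _ T) = <<s metric_open dist >> ->
  tagged_partition dist nu C A X ->
  (forall y : T -> 'rV[R]_n, lipschitz_map dist y ->
     forall f : T -> 'rV[R]_n -> R, test_function dist f ->
       (`| monokinetic_pair nu y f - (empirical_pair X (fun i => y (X i)) f)%:E |
         <= (C / N%:R)%:E * Lip dist (fun x => f x (y x)))%E) /\
  (forall Xi : 'I_N -> 'rV[R]_n,
     forall f : T -> 'rV[R]_n -> R, test_function dist f ->
       (`| monokinetic_pair nu (piecewise_const A Xi) f - (empirical_pair X Xi f)%:E |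
         <= (C / N%:R)%:E * \big[maxe/-oo]_(i < N) Lip dist (fun x => f x (Xi i)))%E).
Proof.
(* The bounds only involve Lip of the composite maps. *)
move=> dist_metric _ measurableE tagged; split.
- move=> y _ f _.
  exact: (tagged_quadrature_error dist_metric measurableE tagged
    (fun _ x => f x (y x)) (fun _ _ _ => erefl) (fun _ => lexx _)).
- move=> Xi f _; have [[_ A_disj] _ _ _ _] := tagged.
  apply: (tagged_quadrature_error dist_metric measurableE tagged (fun i x => f x (Xi i))).
  + by move=> i x Aix; rewrite /piecewise_const (sum_indic_cell A_disj Xi Aix).
  + by move=> i; rewrite (bigD1 i) //= le_max lexx.
Qed.
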